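(* Let $(p_{ij})_{i,j\in\{0,1\}}$ be a transition matrix with all $p_{ij}\in(0,1)$ and $p_{ij}\ne\tfrac12$ for some $(i,j)$, and for $i\in\{0,1\}$, $n\in\mathbb N_0$ let $I_n^i$ be binomially $B(n,p_{i0})$ distributed. Let $(a_i(n))_{n\in\mathbb N_0}$, $(\varepsilon_i(n))_{n\in\mathbb N_0}$, $i\in\{0,1\}$, be real sequences satisfying $$a_i(n)=\mathbb E[a_0(I_n^i)]+\mathbb E[a_1(n-I_n^i)]+\varepsilon_i(n),\qquad i\in\{0,1\},\ n\in\mathbb N.$$ If $\varepsilon_i(n)=c_in+O(n^\alpha)$ for constants $c_0,c_1\in\mathbb R$, some $\alpha<1$ and both $i$, then as $n\to\infty$ $$a_i(n)=\frac{\pi_0c_0+\pi_1c_1}{H}n\log n+O(n),\qquad i\in\{0,1\}.$$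
   Context: $\pi_0=p_{10}/(p_{01}+p_{10})$, $\pi_1=p_{01}/(p_{01}+p_{10})$, $H_i=-\sum_{j}p_{ij}\log p_{ij}$, $H=\pi_0H_0+\pi_1H_1$. *)

From Stdlib Require Import Reals Lra.
Open Scope R_scope.

(* States {0,1} are encoded as bool: false = 0, true = 1. *)

Definition binom_exp (n : nat) (q : R) (f : nat -> R) : R :=
  sum_f_R0 (fun k => C n k * q ^ k * (1 - q) ^ (n - k) * f k) n.

Definition BigO (f g : nat -> R) : Prop :=
  exists K : R, exists N : nat, forall n : nat, (N <= n)%nat -> Rabs (f n) <= K * Rabs (g n).

Definition pi0 (p : bool -> bool -> R) : R := p true false / (p false true + p true false).
Definition pi1 (p : bool -> bool -> R) : R := p false true / (p false true + p true false).
Definition Hrow (p : bool -> bool -> R) (i : bool) : R :=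
  - (p i false * ln (p i false) + p i true * ln (p i true)).
Definition Hent (p : bool -> bool -> R) : R := pi0 p * Hrow p false + pi1 p * Hrow p true.

(* Subtracting the main term K n ln n together with a linear correction d_i n,
   where d solves the Poisson equation (I - P) d = c - K H of the chain (solvable
   precisely because K = (pi . c) / H), leaves a remainder obeying the same
   splitting recurrence with a toll O(n^beta), beta < 1: the convexity estimate
   E[I ln I] = nq ln(nq) + O(1) converts the linear toll c_i n into entropy.
   Such a remainder is O(n), by comparison with the supersolution
   A n - n^gamma (beta < gamma < 1): strict concavity gives
   q^gamma + (1-q)^gamma > 1, so each splitting step gains a margin of order
   n^gamma that absorbs the toll. *)

From Stdlib Require Import Reals Lra Lia.
Open Scope R_scope.

Lemma C_nonneg n k : 0 <= C n k.
Proof.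
  unfold C. apply Rmult_le_pos; [left; apply INR_fact_lt_0|].
  left; apply Rinv_0_lt_compat, Rmult_lt_0_compat; apply INR_fact_lt_0.
Qed.

Lemma binom_exp_ext n q f g :
  (forall k, (k <= n)%nat -> f k = g k) -> binom_exp n q f = binom_exp n q g.
Proof. intro Hfg. apply sum_eq. intros k Hk. rewrite Hfg; auto. Qed.

Lemma binom_exp_plus n q f g :
  binom_exp n q (fun k => f k + g k) = binom_exp n q f + binom_exp n q g.
Proof. unfold binom_exp. rewrite <- plus_sum. apply sum_eq. intros; ring. Qed.

Lemma binom_exp_scal n q a f :
  binom_exp n q (fun k => a * f k) = a * binom_exp n q f.
Proof. unfold binom_exp. rewrite scal_sum. apply sum_eq. intros; ring. Qed.

Lemma binom_exp_const n q a : binom_exp n q (fun _ => a) = a.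
Proof.
  transitivity (a * (q + (1 - q)) ^ n).
  - unfold binom_exp. rewrite binomial, scal_sum. apply sum_eq. intros; ring.
  - replace (q + (1 - q)) with 1 by ring. rewrite pow1. ring.
Qed.

Lemma binom_exp_le n q f g : 0 <= q <= 1 ->
  (forall k, (k <= n)%nat -> f k <= g k) -> binom_exp n q f <= binom_exp n q g.
Proof.
  intros Hq Hfg. apply sum_Rle. intros k Hk. apply Rmult_le_compat_l; auto.
  apply Rmult_le_pos; [apply Rmult_le_pos; [apply C_nonneg|]|]; apply pow_le; lra.
Qed.

Lemma binom_exp_abs n q f : 0 <= q <= 1 ->
  Rabs (binom_exp n q f) <= binom_exp n q (fun k => Rabs (f k)).
Proof.
  intro Hq. apply Rabs_le. split.
  - replace (- _) with (binom_exp n q (fun k => -1 * Rabs (f k)))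
      by (rewrite binom_exp_scal; ring).
    apply binom_exp_le; auto. intros k _.
    pose proof (Rle_abs (- f k)). rewrite Rabs_Ropp in *. lra.
  - apply binom_exp_le; auto. intros; apply Rle_abs.
Qed.

Lemma sum_f_R0_rev (h : nat -> R) n :
  sum_f_R0 (fun k => h (n - k)%nat) n = sum_f_R0 h n.
Proof.
  induction n as [|n IHn]; [reflexivity|].
  rewrite decomp_sum, tech5 by lia. simpl pred.
  rewrite <- IHn, Nat.sub_0_r. rewrite Rplus_comm. f_equal.
Qed.

Lemma binom_exp_reflect n q f :
  binom_exp n q (fun k => f (n - k)%nat) = binom_exp n (1 - q) f.
Proof.
  unfold binom_exp.
  rewrite <- (sum_f_R0_rev (fun k => C n k * (1 - q) ^ k * (1 - (1 - q)) ^ (n - k) * f k)).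
  apply sum_eq. intros k Hk. rewrite (pascal_step1 n k Hk).
  replace (n - (n - k))%nat with k by lia. replace (1 - (1 - q)) with q by ring. ring.
Qed.

Lemma C_succ_mul m j : (j <= m)%nat -> C (S m) (S j) * INR (S j) = INR (S m) * C m j.
Proof.
  intro Hj. unfold C. replace (S m - S j)%nat with (m - j)%nat by lia.
  change (Factorial.fact (S m)) with (S m * Factorial.fact m)%nat.
  change (Factorial.fact (S j)) with (S j * Factorial.fact j)%nat.
  rewrite !mult_INR. pose proof (INR_fact_lt_0 m). pose proof (INR_fact_lt_0 j).
  pose proof (INR_fact_lt_0 (m - j)). pose proof (lt_0_INR (S j) (Nat.lt_0_succ j)).
  field. lra.
Qed.

Lemma binom_exp_size_bias m q g :
  binom_exp (S m) q (fun k => INR k * g k) = INR (S m) * q * binom_exp m q (fun j => g (S j)).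
Proof.
  unfold binom_exp. rewrite decomp_sum by lia. simpl pred. rewrite scal_sum.
  simpl INR at 1. rewrite Rmult_0_l, Rmult_0_r, Rplus_0_l.
  apply sum_eq. intros j Hj. replace (S m - S j)%nat with (m - j)%nat by lia.
  transitivity ((C (S m) (S j) * INR (S j)) * q ^ S j * (1 - q) ^ (m - j) * g (S j)); [ring|].
  rewrite C_succ_mul by auto. simpl. ring.
Qed.

Lemma binom_exp_mean n q : binom_exp n q INR = INR n * q.
Proof.
  destruct n as [|m]; [unfold binom_exp; simpl; ring|].
  transitivity (binom_exp (S m) q (fun k => INR k * 1)).
  - apply binom_exp_ext; intros; ring.
  - rewrite binom_exp_size_bias, binom_exp_const. ring.
Qed.

Lemma binom_exp_affine n q a b :
  binom_exp n q (fun k => a + b * INR k) = a + b * (INR n * q).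
Proof. rewrite binom_exp_plus, binom_exp_scal, binom_exp_const, binom_exp_mean. ring. Qed.

Lemma binom_exp_ge_affine n q f a b : 0 <= q <= 1 ->
  (forall k, (k <= n)%nat -> a + b * INR k <= f k) -> a + b * (INR n * q) <= binom_exp n q f.
Proof. intros Hq Hf. rewrite <- binom_exp_affine. apply binom_exp_le; auto. Qed.

Lemma binom_exp_le_affine n q f a b : 0 <= q <= 1 ->
  (forall k, (k <= n)%nat -> f k <= a + b * INR k) -> binom_exp n q f <= a + b * (INR n * q).
Proof. intros Hq Hf. rewrite <- binom_exp_affine. apply binom_exp_le; auto. Qed.

Lemma binom_exp_indicator_top n q :
  binom_exp n q (fun k => if Nat.eqb k n then 1 else 0) = q ^ n.
Proof.
  unfold binom_exp. destruct n as [|m].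
  - unfold C. simpl. field.
  - rewrite tech5, Nat.eqb_refl, Nat.sub_diag.
    rewrite (sum_eq _ (fun _ => 0)).
    + rewrite sum_cte, Rmult_0_l, Rplus_0_l. unfold C. rewrite Nat.sub_diag.
      pose proof (INR_fact_neq_0 (S m)). change (INR (Factorial.fact 0)) with 1. field. auto.
    + intros k Hk. destruct (Nat.eqb_spec k (S m)); [lia|ring].
Qed.

Lemma ln_le x y : 0 < x -> x <= y -> ln x <= ln y.
Proof. intros Hx [Hxy | <-]; [left; apply ln_increasing | right]; auto. Qed.

Lemma exp_le x y : x <= y -> exp x <= exp y.
Proof. intros [Hxy | <-]; [left; apply exp_increasing | right]; auto. Qed.

Lemma ln_le_tangent y M : 0 < y -> 0 < M -> ln y <= ln M + (y / M - 1).
Proof.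
  intros Hy HM. pose proof (exp_ineq1_le (ln (y / M))).
  rewrite exp_ln in H by (apply Rdiv_lt_0_compat; auto).
  unfold Rdiv in *. rewrite ln_mult, ln_Rinv in H by (auto; apply Rinv_0_lt_compat; auto). lra.
Qed.

Lemma Rpower_ge_tangent y M s : 0 < y -> 0 < M -> s <= 0 ->
  Rpower M s * (1 + s * (y / M - 1)) <= Rpower y s.
Proof.
  intros Hy HM Hs. unfold Rpower.
  replace (s * ln y) with (s * ln M + s * (ln y - ln M)) by ring.
  rewrite exp_plus. apply Rmult_le_compat_l; [left; apply exp_pos|].
  pose proof (exp_ineq1_le (s * (ln y - ln M))). pose proof (ln_le_tangent y M Hy HM). nra.
Qed.

Lemma binom_exp_ln_succ_le m q : 0 <= q <= 1 ->
  binom_exp m q (fun j => ln (INR (S j))) <= ln (1 + INR m * q).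
Proof.
  intro Hq. set (M := 1 + INR m * q).
  assert (HM : 0 < M) by (unfold M; pose proof (pos_INR m); nra).
  replace (ln M) with ((ln M + 1 / M - 1) + (1 / M) * (INR m * q)) by (unfold M in *; field; lra).
  apply binom_exp_le_affine; auto. intros k _.
  pose proof (ln_le_tangent (INR (S k)) M (lt_0_INR _ (Nat.lt_0_succ k)) HM).
  rewrite S_INR in *. unfold Rdiv in *. lra.
Qed.

Lemma binom_exp_Rpower_succ_ge m q s : 0 <= q <= 1 -> s <= 0 ->
  Rpower (1 + INR m * q) s <= binom_exp m q (fun j => Rpower (INR (S j)) s).
Proof.
  intros Hq Hs. set (M := 1 + INR m * q).
  assert (HM : 0 < M) by (unfold M; pose proof (pos_INR m); nra).
  replace (Rpower M s)
    with (Rpower M s * (1 + s / M - s) + (Rpower M s * s / M) * (INR m * q))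
    by (unfold M in *; field; lra).
  apply binom_exp_ge_affine; auto. intros k _.
  pose proof (Rpower_ge_tangent (INR (S k)) M s (lt_0_INR _ (Nat.lt_0_succ k)) HM Hs).
  rewrite S_INR in *. replace (Rpower M s * (1 + s / M - s) + Rpower M s * s / M * INR k)
    with (Rpower M s * (1 + s * ((INR k + 1) / M - 1))) by (field; lra). lra.
Qed.

Definition nlogn (k : nat) : R := INR k * ln (INR k).

Lemma binom_exp_nlogn_ge n q : (1 <= n)%nat -> 0 < q < 1 ->
  INR n * q * ln (INR n * q) <= binom_exp n q nlogn.
Proof.
  intros Hn Hq. set (x := INR n * q).
  assert (Hx : 0 < x) by (apply Rmult_lt_0_compat; [apply lt_0_INR; lia | lra]).
  replace (x * ln x) with (- x + (1 + ln x) * (INR n * q)) by (unfold x; ring).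
  apply binom_exp_ge_affine; [lra|]. intros k _. unfold nlogn.
  destruct k as [|k]; [simpl; lra|].
  assert (Hk : 0 < INR (S k)) by apply lt_0_INR, Nat.lt_0_succ.
  pose proof (ln_le_tangent x (INR (S k)) Hx Hk).
  assert (INR (S k) * ln x <= INR (S k) * (ln (INR (S k)) + (x / INR (S k) - 1)))
    by (apply Rmult_le_compat_l; lra).
  replace (INR (S k) * (ln (INR (S k)) + (x / INR (S k) - 1)))
    with (INR (S k) * ln (INR (S k)) + x - INR (S k)) in H0 by (field; lra).
  lra.
Qed.

Lemma binom_exp_nlogn_le n q : (1 <= n)%nat -> 0 < q < 1 ->
  binom_exp n q nlogn <= INR n * q * ln (INR n * q) + 1.
Proof.
  intros Hn Hq. destruct n as [|m]; [lia|]. set (x := INR (S m) * q).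
  assert (Hx : 0 < x) by (apply Rmult_lt_0_compat; [apply lt_0_INR; lia | lra]).
  unfold nlogn. rewrite binom_exp_size_bias. fold x.
  assert (Hm : ln (1 + INR m * q) <= ln (1 + x)).
  { apply ln_le; [pose proof (pos_INR m); nra|]. unfold x. rewrite S_INR. nra. }
  pose proof (ln_le_tangent (1 + x) x ltac:(lra) Hx).
  replace ((1 + x) / x - 1) with (/ x) in H by (field; lra).
  pose proof (binom_exp_ln_succ_le m q ltac:(lra)).
  assert (x * binom_exp m q (fun j => ln (INR (S j))) <= x * (ln x + / x))
    by (apply Rmult_le_compat_l; lra).
  rewrite Rmult_plus_distr_l, Rinv_r in H1 by lra. lra.
Qed.

(* [k^g] for [k >= 1] and [0] at [k = 0] (where [Rpower 0 g = 1]); the factor [k]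
   makes it amenable to size-biasing. *)
Definition rpow_nat (g : R) (k : nat) : R := INR k * Rpower (INR k) (g - 1).

Lemma rpow_nat_eq g k : (1 <= k)%nat -> rpow_nat g k = Rpower (INR k) g.
Proof.
  intro Hk. unfold rpow_nat. rewrite <- (Rpower_1 (INR k)) at 1 by (apply lt_0_INR; lia).
  rewrite <- Rpower_plus. f_equal. ring.
Qed.

Lemma rpow_nat_bounds g k : 0 <= g <= 1 -> 0 <= rpow_nat g k <= INR k.
Proof.
  intro Hg. destruct k as [|k]; [unfold rpow_nat; simpl; lra|].
  rewrite rpow_nat_eq by lia. assert (H1 : 1 <= INR (S k)) by (apply (le_INR 1); lia).
  split; [left; apply exp_pos|].
  rewrite <- (Rpower_1 (INR (S k))) at 2 by lra. apply Rle_Rpower; lra.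
Qed.

Lemma Rpower_succ_lower x g : 1 <= x -> 0 < g < 1 ->
  Rpower x g - 1 <= x * Rpower (1 + x) (g - 1).
Proof.
  intros Hx Hg. unfold Rpower.
  set (u := ln x). set (v := ln (1 + x)).
  assert (Hu : 0 <= u) by (unfold u; rewrite <- ln_1; apply ln_le; lra).
  assert (Huv : u <= v) by (apply ln_le; lra).
  assert (Hsplit : x * exp ((g - 1) * v) = exp (g * u) * exp ((1 - g) * (u - v))).
  { rewrite <- exp_plus, <- (exp_ln x) at 1 by lra. fold u. rewrite <- exp_plus. f_equal. ring. }
  assert (Hratio : exp (u - v) = x / (1 + x)).
  { unfold Rminus. rewrite exp_plus, exp_Ropp. unfold u, v. rewrite !exp_ln by lra. reflexivity. }
  assert (Hgu : exp (g * u) <= x) by (rewrite <- (exp_ln x) by lra; apply exp_le; fold u; nra).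
  assert (Hpow : exp (u - v) <= exp ((1 - g) * (u - v))) by (apply exp_le; nra).
  pose proof (exp_pos (g * u)).
  assert (exp (g * u) * exp (u - v) <= exp (g * u) * exp ((1 - g) * (u - v)))
    by (apply Rmult_le_compat_l; lra).
  rewrite Hratio in H0. rewrite Hsplit.
  assert (exp (g * u) * (x / (1 + x)) = exp (g * u) - exp (g * u) / (1 + x)) by (field; lra).
  assert (exp (g * u) / (1 + x) <= 1)
    by (apply Rmult_le_reg_r with (1 + x); [lra|]; unfold Rdiv; rewrite Rmult_assoc, Rinv_l; lra).
  lra.
Qed.

Lemma binom_exp_rpow_nat_ge n q g : (1 <= n)%nat -> 0 < q < 1 -> 0 < g < 1 ->
  1 <= INR n * q -> Rpower (INR n * q) g - 1 <= binom_exp n q (rpow_nat g).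
Proof.
  intros Hn Hq Hg Hx. destruct n as [|m]; [lia|]. set (x := INR (S m) * q) in *.
  unfold rpow_nat. rewrite binom_exp_size_bias. fold x.
  set (M := 1 + INR m * q).
  assert (HM : 0 < M) by (unfold M; pose proof (pos_INR m); nra).
  assert (HMx : M <= 1 + x) by (unfold M, x; rewrite S_INR; nra).
  assert (Hbase : Rpower (1 + x) (g - 1) <= Rpower M (g - 1)).
  { unfold Rpower. apply exp_le. pose proof (ln_le M (1 + x) HM HMx). nra. }
  pose proof (binom_exp_Rpower_succ_ge m q (g - 1) ltac:(lra) ltac:(lra)). fold M in H.
  pose proof (Rpower_succ_lower x g Hx Hg).
  assert (x * Rpower (1 + x) (g - 1) <= x * binom_exp m q (fun j => Rpower (INR (S j)) (g - 1)))
    by (apply Rmult_le_compat_l; lra).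
  lra.
Qed.

Definition entropy_defect (q : R) (n : nat) : R :=
  binom_exp n q nlogn + binom_exp n (1 - q) nlogn - nlogn n
  - INR n * (q * ln q + (1 - q) * ln (1 - q)).

Lemma entropy_defect_bounds n q : (1 <= n)%nat -> 0 < q < 1 ->
  0 <= entropy_defect q n <= 2.
Proof.
  intros Hn Hq. unfold entropy_defect.
  pose proof (binom_exp_nlogn_ge n q Hn Hq). pose proof (binom_exp_nlogn_le n q Hn Hq).
  pose proof (binom_exp_nlogn_ge n (1 - q) Hn ltac:(lra)).
  pose proof (binom_exp_nlogn_le n (1 - q) Hn ltac:(lra)).
  assert (0 < INR n) by (apply lt_0_INR; lia).
  rewrite ln_mult in * by lra. unfold nlogn in *.
  replace (INR n * q * (ln (INR n) + ln q) + INR n * (1 - q) * (ln (INR n) + ln (1 - q)))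
    with (INR n * ln (INR n) + INR n * (q * ln q + (1 - q) * ln (1 - q))) in * by ring.
  lra.
Qed.

Lemma pow_add_pow_lt_1 q n : 0 < q < 1 -> (2 <= n)%nat -> q ^ n + (1 - q) ^ n < 1.
Proof.
  intros Hq Hn. destruct n as [|n]; [lia|]. simpl.
  pose proof (pow_lt_1_compat q n ltac:(lra) ltac:(lia)).
  pose proof (pow_lt_1_compat (1 - q) n ltac:(lra) ltac:(lia)). nra.
Qed.

Lemma Rpower_add_Rpower_gt_1 q g : 0 < q < 1 -> 0 < g < 1 ->
  1 < Rpower q g + Rpower (1 - q) g.
Proof.
  intros Hq Hg.
  assert (Hlt : forall t, 0 < t < 1 -> t < Rpower t g).
  { intros t Ht. unfold Rpower. rewrite <- (exp_ln t) at 1 by lra. apply exp_increasing.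
    assert (ln t < 0) by (rewrite <- ln_1; apply ln_increasing; lra). nra. }
  pose proof (Hlt q Hq). pose proof (Hlt (1 - q) ltac:(lra)). lra.
Qed.

Definition sublinear (A g : R) (k : nat) : R := A * INR k - rpow_nat g k.

Lemma binom_exp_sublinear_pair A g n r : (1 <= n)%nat -> 0 < r < 1 -> 0 < g < 1 ->
  1 <= INR n * r -> 1 <= INR n * (1 - r) ->
  binom_exp n r (sublinear A g) + binom_exp n (1 - r) (sublinear A g)
  <= sublinear A g n - Rpower (INR n) g * (Rpower r g + Rpower (1 - r) g - 1) + 2.
Proof.
  intros Hn Hr Hg H1 H2.
  assert (Hexp : forall s, binom_exp n s (sublinear A g)
                           = A * (INR n * s) - binom_exp n s (rpow_nat g)).
  { intro s. transitivity (binom_exp n s (fun k => A * INR k + -1 * rpow_nat g k)).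
    - apply binom_exp_ext; intros; unfold sublinear; ring.
    - rewrite binom_exp_plus, !binom_exp_scal, binom_exp_mean. ring. }
  assert (Hn0 : 0 < INR n) by (apply lt_0_INR; lia).
  pose proof (binom_exp_rpow_nat_ge n r g Hn Hr Hg H1).
  pose proof (binom_exp_rpow_nat_ge n (1 - r) g Hn ltac:(lra) Hg H2).
  rewrite <- Rpower_mult_distr in * by lra.
  rewrite !Hexp. unfold sublinear. rewrite rpow_nat_eq by auto. lra.
Qed.

Definition eventually (P : nat -> Prop) : Prop :=
  exists N, forall n, (N <= n)%nat -> P n.

Lemma eventually_and (P Q : nat -> Prop) :
  eventually P -> eventually Q -> eventually (fun n => P n /\ Q n).
Proof.
  intros [N HN] [M HM]. exists (max N M). intros n Hn. split; [apply HN | apply HM]; lia.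
Qed.

Lemma eventually_mono (P Q : nat -> Prop) :
  (forall n, P n -> Q n) -> eventually P -> eventually Q.
Proof. intros HPQ [N HN]. exists N. auto. Qed.

Lemma eventually_nat_ge m : eventually (fun n => (m <= n)%nat).
Proof. exists m. auto. Qed.

Lemma eventually_INR_ge x : eventually (fun n => x <= INR n).
Proof.
  destruct (INR_unbounded x) as [N HN]. exists N. intros n Hn. apply le_INR in Hn. lra.
Qed.

Lemma eventually_INR_mul_ge_1 r : 0 < r -> eventually (fun n => 1 <= INR n * r).
Proof.
  intro Hr. apply (eventually_mono (fun n => / r <= INR n)); [|apply eventually_INR_ge].
  intros n Hn. apply (Rmult_le_compat_r r) in Hn; [|lra]. rewrite Rinv_l in Hn; lra.
Qed.

Lemma eventually_Rpower_dominates d T K b g : 0 < d -> 0 <= T -> 0 <= K -> 0 <= b < g ->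
  eventually (fun n => T + K * Rpower (INR n) b <= d * Rpower (INR n) g).
Proof.
  intros Hd HT HK Hbg. set (X := (T + K) / d).
  apply (eventually_mono (fun n => Rmax 1 (exp (X / (g - b))) <= INR n));
    [|apply eventually_INR_ge].
  intros n Hn. pose proof (Rmax_l 1 (exp (X / (g - b)))).
  pose proof (Rmax_r 1 (exp (X / (g - b)))).
  assert (Hln : X / (g - b) <= ln (INR n)) by (rewrite <- (ln_exp (X / (g - b))); apply ln_le; [apply exp_pos | lra]).
  assert (Hgap : X <= Rpower (INR n) (g - b)).
  { unfold Rpower. pose proof (exp_ineq1_le ((g - b) * ln (INR n))).
    apply (Rmult_le_compat_l (g - b)) in Hln; [|lra].
    replace ((g - b) * (X / (g - b))) with X in Hln by (field; lra). lra. }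
  assert (Hb1 : 1 <= Rpower (INR n) b)
    by (rewrite <- (Rpower_O (INR n)) by lra; apply Rle_Rpower; lra).
  replace (Rpower (INR n) g) with (Rpower (INR n) b * Rpower (INR n) (g - b))
    by (rewrite <- Rpower_plus; f_equal; ring).
  assert (HX : T + K = d * X) by (unfold X; field; lra).
  assert (T + K * Rpower (INR n) b <= (T + K) * Rpower (INR n) b) by nra.
  assert (d * X * Rpower (INR n) b <= d * Rpower (INR n) (g - b) * Rpower (INR n) b)
    by (apply Rmult_le_compat_r; [lra|]; apply Rmult_le_compat_l; lra).
  nra.
Qed.

Lemma sublinear_supersolution_eventually r be g K T : 0 < r < 1 ->
  0 <= be < g /\ 0 < g < 1 -> 0 <= K -> 0 <= T ->
  eventually (fun n => forall A t, t <= T + K * Rpower (INR n) be ->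
    binom_exp n r (sublinear A g) + binom_exp n (1 - r) (sublinear A g) + t <= sublinear A g n).
Proof.
  intros Hr Hg HK HT. set (gap := Rpower r g + Rpower (1 - r) g - 1).
  assert (Hgap : 0 < gap) by (pose proof (Rpower_add_Rpower_gt_1 r g Hr (proj2 Hg)); unfold gap; lra).
  generalize (eventually_and _ _ (eventually_nat_ge 1)
    (eventually_and _ _
      (eventually_and _ _ (eventually_INR_mul_ge_1 r ltac:(lra))
                          (eventually_INR_mul_ge_1 (1 - r) ltac:(lra)))
      (eventually_Rpower_dominates gap (2 + T) K be g Hgap ltac:(lra) HK ltac:(lra)))).
  apply eventually_mono. intros n [Hn [[H1 H2] Hdom]] A t Ht.
  pose proof (binom_exp_sublinear_pair A g n r Hn Hr (proj2 Hg) H1 H2).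
  fold gap in H. lra.
Qed.

Lemma BigO_ext f f' g : (forall n, f n = f' n) -> BigO f g -> BigO f' g.
Proof. intros Hff' [K [N HN]]. exists K, N. intros n Hn. rewrite <- Hff'. auto. Qed.

Lemma BigO_plus f1 f2 g : BigO f1 g -> BigO f2 g -> BigO (fun n => f1 n + f2 n) g.
Proof.
  intros [K1 [N1 H1]] [K2 [N2 H2]]. exists (K1 + K2), (max N1 N2). intros n Hn.
  pose proof (Rabs_triang (f1 n) (f2 n)). specialize (H1 n ltac:(lia)).
  specialize (H2 n ltac:(lia)). lra.
Qed.

Lemma BigO_scal_self c g : BigO (fun n => c * g n) g.
Proof. exists (Rabs c), 0%nat. intros n _. rewrite Rabs_mult. lra. Qed.

Lemma BigO_nonneg_const f g : BigO f g ->
  exists K, 0 <= K /\ eventually (fun n => Rabs (f n) <= K * Rabs (g n)).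
Proof.
  intros [K [N HN]]. exists (Rmax K 0). split; [apply Rmax_r|]. exists N. intros n Hn.
  pose proof (Rmax_l K 0). pose proof (Rabs_pos (g n)). specialize (HN n Hn). nra.
Qed.

Lemma BigO_Rpower_mono f a b : a <= b ->
  BigO f (fun n => Rpower (INR n) a) -> BigO f (fun n => Rpower (INR n) b).
Proof.
  intros Hab HO. destruct (BigO_nonneg_const _ _ HO) as [K [HK [N HN]]].
  exists K, (max N 1). intros n Hn. specialize (HN n ltac:(lia)).
  assert (1 <= INR n) by (apply (le_INR 1); lia).
  cbv beta in *. rewrite !(Rabs_right (Rpower _ _)) in * by (left; apply exp_pos).
  assert (Rpower (INR n) a <= Rpower (INR n) b) by (apply Rle_Rpower; lra). nra.
Qed.

Lemma BigO_bounded_Rpower f B b : 0 <= b ->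
  eventually (fun n => Rabs (f n) <= B) -> BigO f (fun n => Rpower (INR n) b).
Proof.
  intros Hb [N HN]. exists (Rmax B 0), (max N 1). intros n Hn. specialize (HN n ltac:(lia)).
  assert (1 <= INR n) by (apply (le_INR 1); lia).
  assert (1 <= Rpower (INR n) b) by (rewrite <- (Rpower_O (INR n)) by lra; apply Rle_Rpower; lra).
  rewrite (Rabs_right (Rpower _ _)) by lra. pose proof (Rmax_l B 0). pose proof (Rmax_r B 0). nra.
Qed.

Lemma BigO_bool_uniform (f : bool -> nat -> R) g : (forall i, BigO (f i) g) ->
  exists K, 0 <= K /\ eventually (fun n => forall i, Rabs (f i n) <= K * Rabs (g n)).
Proof.
  intro HO. destruct (BigO_nonneg_const _ _ (HO false)) as [K0 [HK0 Hev0]].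
  destruct (BigO_nonneg_const _ _ (HO true)) as [K1 [HK1 Hev1]].
  exists (K0 + K1). split; [lra|].
  generalize (eventually_and _ _ Hev0 Hev1). apply eventually_mono.
  intros n [H0 H1] i. pose proof (Rabs_pos (g n)). destruct i; nra.
Qed.

Lemma finite_prefix_bound (e : bool -> nat -> R) N :
  exists A, 0 <= A /\ forall j k, (k < N)%nat -> Rabs (e j k) <= A.
Proof.
  induction N as [|N [A [HA HAb]]]; [exists 0; split; [lra | intros; lia]|].
  exists (Rmax A (Rabs (e false N) + Rabs (e true N))).
  pose proof (Rmax_l A (Rabs (e false N) + Rabs (e true N))).
  pose proof (Rmax_r A (Rabs (e false N) + Rabs (e true N))).
  pose proof (Rabs_pos (e false N)). pose proof (Rabs_pos (e true N)).
  split; [lra|]. intros j k Hk. destruct (Nat.eq_dec k N) as [->|Hne].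
  - destruct j; lra.
  - specialize (HAb j k ltac:(lia)). lra.
Qed.

Section SplittingRecurrence.

Variable q : bool -> R.
Hypothesis Hq : forall i, 0 < q i < 1.
Variables e F : bool -> nat -> R.
Hypothesis Hrec : forall i n, (1 <= n)%nat ->
  e i n = binom_exp n (q i) (e false) + binom_exp n (q i) (fun k => e true (n - k)%nat) + F i n.

Lemma rec_abs_le (h : nat -> R) n i : (1 <= n)%nat ->
  (forall j k, (k <= n)%nat -> Rabs (e j k) <= h k) ->
  Rabs (e i n) <= binom_exp n (q i) h + binom_exp n (1 - q i) h + Rabs (F i n).
Proof.
  intros Hn Hh. pose proof (Hq i). rewrite Hrec by auto.
  pose proof (binom_exp_abs n (q i) (e false) ltac:(lra)).
  pose proof (binom_exp_abs n (q i) (fun k => e true (n - k)%nat) ltac:(lra)).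
  assert (binom_exp n (q i) (fun k => Rabs (e false k)) <= binom_exp n (q i) h)
    by (apply binom_exp_le; [lra | auto]).
  assert (binom_exp n (q i) (fun k => Rabs (e true (n - k)%nat)) <= binom_exp n (1 - q i) h)
    by (rewrite <- binom_exp_reflect; apply binom_exp_le; [lra | intros; apply Hh; lia]).
  pose proof (Rabs_triang (binom_exp n (q i) (e false)
                           + binom_exp n (q i) (fun k => e true (n - k)%nat)) (F i n)).
  pose proof (Rabs_triang (binom_exp n (q i) (e false))
                          (binom_exp n (q i) (fun k => e true (n - k)%nat))).
  lra.
Qed.

(* The recurrence is implicit: [e j n] itself occurs on the right with weight
   [q^n + (1-q)^n < 1], so any excess of [e j n] over [g n] would reproduce
   itself with a factor [< 1]. *)
Lemma supersolution_step (g : nat -> R) E0 n : (2 <= n)%nat -> 0 <= E0 ->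
  (forall j, Rabs (e j 0%nat) <= g 0%nat + E0) ->
  (forall j k, (1 <= k)%nat -> (k < n)%nat -> Rabs (e j k) <= g k) ->
  (forall i, binom_exp n (q i) g + binom_exp n (1 - q i) g + 2 * E0 + Rabs (F i n) <= g n) ->
  forall j, Rabs (e j n) <= g n.
Proof.
  intros Hn HE0 H0 Hlt Hsuper.
  set (M := Rmax (Rabs (e false n)) (Rabs (e true n))).
  set (u := Rmax 0 (M - g n)).
  assert (HM : forall j, Rabs (e j n) <= M) by (intro j; destruct j; [apply Rmax_r | apply Rmax_l]).
  assert (Hu : 0 <= u /\ M - g n <= u) by (split; [apply Rmax_l | apply Rmax_r]).
  set (rho := Rmax (q false ^ n + (1 - q false) ^ n) (q true ^ n + (1 - q true) ^ n)).
  assert (Hrho : 0 <= rho < 1).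
  { split.
    - pose proof (Hq false). eapply Rle_trans; [|apply Rmax_l].
      pose proof (pow_le (q false) n). pose proof (pow_le (1 - q false) n). lra.
    - apply Rmax_lub_lt; apply pow_add_pow_lt_1; auto. }
  assert (Hexcess : forall i, Rabs (e i n) <= g n + u * rho).
  { intro i.
    set (h := fun k => g k + E0 + u * (if Nat.eqb k n then 1 else 0)).
    assert (Hh : forall j k, (k <= n)%nat -> Rabs (e j k) <= h k).
    { intros j k Hk. unfold h. destruct (Nat.eqb_spec k n) as [->|Hne].
      - specialize (HM j). lra.
      - destruct k as [|k]; [specialize (H0 j) | specialize (Hlt j (S k) ltac:(lia) ltac:(lia))];
          lra. }
    assert (Hh_exp : forall r, binom_exp n r h = binom_exp n r g + E0 + u * r ^ n).
    { intro r. unfold h. rewrite !binom_exp_plus, binom_exp_const, binom_exp_scal,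
        binom_exp_indicator_top. ring. }
    pose proof (rec_abs_le h n i ltac:(lia) Hh). rewrite !Hh_exp in H.
    assert (q i ^ n + (1 - q i) ^ n <= rho) by (destruct i; [apply Rmax_r | apply Rmax_l]).
    specialize (Hsuper i). nra. }
  intro j. enough (M <= g n) by (specialize (HM j); lra).
  destruct (Rle_lt_dec M (g n)) as [|Hgt]; auto.
  assert (Hu_eq : u = M - g n) by (apply Rmax_right; lra).
  assert (M <= g n + u * rho) by (apply Rmax_lub; apply Hexcess).
  nra.
Qed.

Lemma rec_linear_bound_explicit be K N1 : 0 <= be < 1 -> 0 <= K ->
  (forall i n, (N1 <= n)%nat -> Rabs (F i n) <= K * Rpower (INR n) be) ->
  exists A, forall j n, (1 <= n)%nat -> Rabs (e j n) <= A * INR n.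
Proof.
  intros Hbe HK HF. set (ga := (be + 1) / 2).
  assert (Hga : 0 <= be < ga /\ 0 < ga < 1) by (unfold ga; lra).
  set (E0 := Rmax (Rabs (e false 0%nat)) (Rabs (e true 0%nat))).
  assert (HE0 : forall j, Rabs (e j 0%nat) <= E0)
    by (intro j; destruct j; [apply Rmax_r | apply Rmax_l]).
  assert (HE0pos : 0 <= E0) by (pose proof (HE0 true); pose proof (Rabs_pos (e true 0%nat)); lra).
  assert (Hev : eventually (fun n => ((2 <= n)%nat /\ (N1 <= n)%nat)
      /\ forall A i t, t <= 2 * E0 + K * Rpower (INR n) be ->
         binom_exp n (q i) (sublinear A ga) + binom_exp n (1 - q i) (sublinear A ga) + t
         <= sublinear A ga n)).
  { apply eventually_and; [apply eventually_and; apply eventually_nat_ge|].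
    generalize (eventually_and _ _
      (sublinear_supersolution_eventually (q false) be ga K (2 * E0) (Hq false) Hga HK ltac:(lra))
      (sublinear_supersolution_eventually (q true) be ga K (2 * E0) (Hq true) Hga HK ltac:(lra))).
    apply eventually_mono. intros n [H0 H1] A i. destruct i; auto. }
  destruct Hev as [N0 HN0].
  destruct (finite_prefix_bound e N0) as [A0 [HA0 HA0b]].
  exists (A0 + 1).
  assert (Hind : forall m j n, (1 <= n)%nat -> (n < m)%nat ->
                 Rabs (e j n) <= sublinear (A0 + 1) ga n).
  { induction m as [|m IHm]; intros j n Hn Hnm; [lia|].
    destruct (Nat.lt_ge_cases n m) as [|Hmn]; [apply IHm; auto|].
    destruct (Nat.lt_ge_cases n N0) as [HnN0|HnN0].
    - specialize (HA0b j n HnN0). pose proof (rpow_nat_bounds ga n ltac:(lra)).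
      assert (1 <= INR n) by (apply (le_INR 1); lia). unfold sublinear. nra.
    - destruct (HN0 n HnN0) as [[Hn2 HnN1] Hsuper].
      apply (supersolution_step (sublinear (A0 + 1) ga) E0 n); auto.
      + intro j'. unfold sublinear, rpow_nat. simpl INR. rewrite !Rmult_0_l, Rmult_0_r.
        specialize (HE0 j'). lra.
      + intros j' k Hk Hkn. apply IHm; lia.
      + intro i. rewrite Rplus_assoc. apply Hsuper. pose proof (HF i n HnN1). lra. }
  intros j n Hn. pose proof (Hind (S n) j n Hn ltac:(lia)).
  pose proof (rpow_nat_bounds ga n ltac:(lra)). unfold sublinear in *. lra.
Qed.

Lemma rec_linear_bound be : 0 <= be < 1 ->
  (forall i, BigO (F i) (fun n => Rpower (INR n) be)) -> forall j, BigO (e j) INR.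
Proof.
  intros Hbe HF. destruct (BigO_bool_uniform _ _ HF) as [K [HK [N1 HN1]]].
  destruct (rec_linear_bound_explicit be K N1 Hbe HK) as [A HA].
  - intros i n Hn. rewrite <- (Rabs_right (Rpower _ _)) by (left; apply exp_pos). auto.
  - intro j. exists A, 1%nat. intros n Hn. rewrite (Rabs_right (INR n)) by (apply Rle_ge, pos_INR).
    auto.
Qed.
End SplittingRecurrence.

Lemma poisson_two_state (p : bool -> bool -> R) (v : bool -> R) :
  (forall i j, 0 < p i j < 1) -> (forall i, p i false + p i true = 1) ->
  pi0 p * v false + pi1 p * v true = 0 ->
  exists d : bool -> R, forall i, v i = d i - (d false * p i false + d true * p i true).
Proof.
  intros Hp Hstoch Hpi. pose proof (Hp false true). pose proof (Hp true false).
  exists (fun j : bool => if j then 0 else v false / p false true).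
  unfold pi0, pi1 in Hpi.
  assert (Hbal : p true false * v false + p false true * v true = 0).
  { apply (Rmult_eq_compat_r (p false true + p true false)) in Hpi.
    rewrite Rmult_0_l in Hpi. rewrite <- Hpi. field. lra. }
  intro i; destruct i; pose proof (Hstoch false).
  - apply (Rmult_eq_reg_r (p false true)); [|lra]. field_simplify; [nra | lra].
  - field_simplify; [|lra]. replace (p false false) with (1 - p false true) by lra. field. lra.
Qed.

Lemma Hrow_pos p i : (forall i j, 0 < p i j < 1) -> 0 < Hrow p i.
Proof.
  intro Hp. unfold Hrow. pose proof (Hp i false). pose proof (Hp i true).
  assert (ln (p i false) < 0) by (rewrite <- ln_1; apply ln_increasing; lra).
  assert (ln (p i true) < 0) by (rewrite <- ln_1; apply ln_increasing; lra). nra.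
Qed.

Lemma Hent_pos p : (forall i j, 0 < p i j < 1) -> 0 < Hent p.
Proof.
  intro Hp. unfold Hent, pi0, pi1. pose proof (Hp false true). pose proof (Hp true false).
  pose proof (Hrow_pos p false Hp). pose proof (Hrow_pos p true Hp).
  assert (0 < p true false / (p false true + p true false)) by (apply Rdiv_lt_0_compat; lra).
  assert (0 < p false true / (p false true + p true false)) by (apply Rdiv_lt_0_compat; lra).
  nra.
Qed.

Lemma binom_exp_lincomb n q f g h a b :
  binom_exp n q (fun k => f k - a * g k - b * h k)
  = binom_exp n q f - a * binom_exp n q g - b * binom_exp n q h.
Proof.
  transitivity (binom_exp n q (fun k => f k + (-a * g k + -b * h k))).
  - apply binom_exp_ext; intros; ring.
  - rewrite !binom_exp_plus, !binom_exp_scal. ring.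
Qed.

Section Remainder.

Variables (p : bool -> bool -> R) (a eps : bool -> nat -> R) (c d : bool -> R) (K : R).
Hypothesis Hstoch : forall i, p i false + p i true = 1.
Hypothesis Hrec : forall (i : bool) (n : nat), (1 <= n)%nat ->
  a i n = binom_exp n (p i false) (fun k => a false k)
        + binom_exp n (p i false) (fun k => a true (n - k)%nat) + eps i n.
Hypothesis Hdrift : forall i, c i - K * Hrow p i = d i - (d false * p i false + d true * p i true).

Definition remainder (j : bool) (k : nat) : R := a j k - K * nlogn k - d j * INR k.

Definition remainder_toll (i : bool) (n : nat) : R :=
  (eps i n - c i * INR n) + K * entropy_defect (p i false) n.

Lemma remainder_rec i n : (1 <= n)%nat ->
  remainder i n = binom_exp n (p i false) (remainder false)
    + binom_exp n (p i false) (fun k => remainder true (n - k)%nat) + remainder_toll i n.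
Proof.
  intro Hn. unfold remainder, remainder_toll, entropy_defect.
  rewrite (binom_exp_lincomb n (p i false) (a false) nlogn INR).
  rewrite (binom_exp_lincomb n (p i false) (fun k => a true (n - k)%nat)
             (fun k => nlogn (n - k)%nat) (fun k => INR (n - k))).
  rewrite (binom_exp_reflect n _ nlogn), (binom_exp_reflect n _ INR), !binom_exp_mean, Hrec by auto.
  specialize (Hdrift i). unfold Hrow in Hdrift.
  replace (p i true) with (1 - p i false) in Hdrift by (specialize (Hstoch i); lra).
  replace (c i) with (d i - (d false * p i false + d true * (1 - p i false))
    - K * (p i false * ln (p i false) + (1 - p i false) * ln (1 - p i false))) by lra.
  change (fun k => a false k) with (a false). ring.
Qed.

End Remainder.

Theorem lemma4p2
  (p : bool -> bool -> R)
  (Hp01 : forall i j, 0 < p i j < 1)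
  (Hstoch : forall i, p i false + p i true = 1)
  (Hnothalf : exists i j, p i j <> 1 / 2)
  (a eps : bool -> nat -> R)
  (Hrec : forall (i : bool) (n : nat), (1 <= n)%nat ->
     a i n = binom_exp n (p i false) (fun k => a false k)
           + binom_exp n (p i false) (fun k => a true (n - k)%nat)
           + eps i n)
  (c : bool -> R)
  (Heps : exists alpha : R, alpha < 1 /\
     forall i : bool, BigO (fun n => eps i n - c i * INR n) (fun n => Rpower (INR n) alpha)) :
  forall i : bool,
    BigO (fun n => a i n - (pi0 p * c false + pi1 p * c true) / Hent p * INR n * ln (INR n))
         (fun n => INR n).
Proof.
  intro i.
  set (K := (pi0 p * c false + pi1 p * c true) / Hent p).
  destruct (poisson_two_state p (fun j => c j - K * Hrow p j) Hp01 Hstoch) as [d Hd].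
  { pose proof (Hent_pos p Hp01).
    replace (pi0 p * (c false - K * Hrow p false) + pi1 p * (c true - K * Hrow p true))
      with (pi0 p * c false + pi1 p * c true - K * Hent p) by (unfold Hent; ring).
    unfold K. field. lra. }
  destruct Heps as [alpha [Halpha Heps]].
  set (be := Rmax alpha 0).
  assert (Htoll : forall j, BigO (remainder_toll p eps c K j) (fun n => Rpower (INR n) be)).
  { intro j. apply BigO_plus.
    - apply BigO_Rpower_mono with alpha; [apply Rmax_l | apply Heps].
    - apply BigO_bounded_Rpower with (2 * Rabs K); [apply Rmax_r|]. exists 1%nat. intros n Hn.
      pose proof (entropy_defect_bounds n (p j false) Hn (Hp01 j false)).
      rewrite Rabs_mult, (Rabs_right (entropy_defect _ _)) by lra. pose proof (Rabs_pos K). nra. }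
  assert (Hbe : 0 <= be < 1) by (split; [apply Rmax_r | apply Rmax_lub_lt; lra]).
  pose proof (rec_linear_bound (fun j => p j false) (fun j => Hp01 j false)
                (remainder a d K) (remainder_toll p eps c K)
                (remainder_rec p a eps c d K Hstoch Hrec Hd) be Hbe Htoll i) as Hrem.
  apply BigO_ext with (fun n => remainder a d K i n + d i * INR n).
  { intro n. unfold remainder, nlogn. ring. }
  apply BigO_plus; [exact Hrem | apply BigO_scal_self].
Qed.
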